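(* Assume the loss depends on the covariates only through the prediction: $L\{f,(y,x_1^{(a)},x_2^{(a)})\}=L\{f,(y,x_1^{(b)},x_2^{(b)})\}$ whenever $f(x_1^{(a)},x_2^{(a)})=f(x_1^{(b)},x_2^{(b)})$. Assume further that for every distribution $D$ on $\mathcal{Z}$ under which $X_1$ is independent of $(X_2,Y)$, there exists $f_D\in\mathcal{F}$ with $\mathbb{E}_DL\{f_D,(Y,X_1,X_2)\}=\min_{f\in\mathcal{F}}\mathbb{E}_DL\{f,(Y,X_1,X_2)\}$ and $f_D(x_1^{(a)},x_2)=f_D(x_1^{(b)},x_2)$ for all $x_1^{(a)},x_1^{(b)}\in\mathcal{X}_1$, $x_2\in\mathcal{X}_2$. Then every minimizer $\hat g$ of $\hat h_{-,0}(f)=\hat e_{\text{switch}}(f)$ over $f\in\mathcal{F}$ satisfies $\widehat{MR}(\hat g)\le1$.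
   Context: Setting: $\mathcal{Z}=\mathcal{Y}\times\mathcal{X}_1\times\mathcal{X}_2$; $\mathcal{F}$ a set of measurable functions $\mathcal{X}_1\times\mathcal{X}_2\to\mathcal{Y}$; $L:\mathcal{F}\times\mathcal{Z}\to\mathbb{R}_{\ge0}$ a nonnegative loss. A fixed observed sample $(\mathbf{y}_{[i]},\mathbf{X}_{1[i]},\mathbf{X}_{2[i]})$, $i=1,\dots,n$, $n\ge2$. $\hat e_{\text{orig}}(f)=\frac1n\sum_iL\{f,(\mathbf{y}_{[i]},\mathbf{X}_{1[i]},\mathbf{X}_{2[i]})\}$, $\hat e_{\text{switch}}(f)=\frac1{n(n-1)}\sum_i\sum_{j\ne i}L\{f,(\mathbf{y}_{[j]},\mathbf{X}_{1[i]},\mathbf{X}_{2[j]})\}$, $\widehat{MR}=\hat e_{\text{switch}}/\hat e_{\text{orig}}$. For $\gamma\in\mathbb{R}$, $\hat h_{-,\gamma}(f):=\gamma\hat e_{\text{orig}}(f)+\hat e_{\text{switch}}(f)$. Standing assumptions: $\min_{f\in\mathcal{F}}\hat e_{\text{orig}}(f)>0$, and all minimizers of $\hat h_{-,\gamma}$ over $\mathcal{F}$ exist. *)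

From HB Require Import structures.
From mathcomp Require Import all_boot all_order all_algebra.
From mathcomp Require Import all_classical all_reals all_analysis.
Set Implicit Arguments. Unset Strict Implicit. Unset Printing Implicit Defensive.
Import Order.TTheory GRing.Theory Num.Theory.
Local Open Scope ring_scope.

Section Defs.
Context {R : realType} {Y X1 X2 : Type}.

Definition e_orig (L : (X1 * X2 -> Y) -> Y * X1 * X2 -> R) (n : nat)
  (y : 'I_n -> Y) (x1 : 'I_n -> X1) (x2 : 'I_n -> X2) (f : X1 * X2 -> Y) : R :=
  n%:R^-1 * \sum_(i < n) L f (y i, x1 i, x2 i).

Definition e_switch (L : (X1 * X2 -> Y) -> Y * X1 * X2 -> R) (n : nat)
  (y : 'I_n -> Y) (x1 : 'I_n -> X1) (x2 : 'I_n -> X2) (f : X1 * X2 -> Y) : R :=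
  (n%:R * (n%:R - 1))^-1 *
    \sum_(i < n) \sum_(j < n | j != i) L f (y j, x1 i, x2 j).

Definition MR_hat L n (y : 'I_n -> Y) x1 x2 (f : X1 * X2 -> Y) : R :=
  e_switch L y x1 x2 f / e_orig L y x1 x2 f.

Definition h_minus (gamma : R) L n (y : 'I_n -> Y) x1 x2 (f : X1 * X2 -> Y) : R :=
  gamma * e_orig L y x1 x2 f + e_switch L y x1 x2 f.

End Defs.

Section Prob.
Local Open Scope classical_set_scope.
Context {R : realType} {dY dX1 dX2 : measure_display}
  {Y : measurableType dY} {X1 : measurableType dX1} {X2 : measurableType dX2}.

Definition exp_loss (D : probability (Y * X1 * X2)%type R)
  (L : (X1 * X2 -> Y) -> Y * X1 * X2 -> R) (f : X1 * X2 -> Y) : \bar R :=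
  (\int[D]_z (L f z)%:E)%E.

Definition X1_indep_X2Y (D : probability (Y * X1 * X2)%type R) : Prop :=
  forall (A : set X1) (B : set (X2 * Y)%type), measurable A -> measurable B ->
    D [set z : Y * X1 * X2 | A z.1.2 /\ B (z.2, z.1.1)] =
    (D [set z : Y * X1 * X2 | A z.1.2] * D [set z : Y * X1 * X2 | B (z.2, z.1.1)])%E.

End Prob.

From HB Require Import structures.
From mathcomp Require Import all_boot all_order all_algebra.
From mathcomp Require Import all_classical all_reals all_analysis.
From mathcomp Require Import measurable_realfun.
From mathcomp Require Import ring lra.
Set Implicit Arguments.
Unset Strict Implicit.
Unset Printing Implicit Defensive.
Import Order.TTheory GRing.Theory Num.Theory.
Local Open Scope classical_set_scope.
Local Open Scope ring_scope.

(** Let D put mass 1/n^2 on every point (y_j, x1_i, x2_j). Under D, X1 is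
  independent of (X2, Y), so some D-optimal model f_D ignores X1, and hence
  e_switch f_D = e_orig f_D. The D-risk of a model is the mixture
  ((n-1)/n) e_switch + (1/n) e_orig, so comparing the D-risks of f_D and g_hat,
  where g_hat minimizes e_switch, gives e_orig f_D <= e_orig g_hat. Therefore
  e_switch g_hat <= e_switch f_D = e_orig f_D <= e_orig g_hat. *)

Lemma grid_mean_mul (F : numFieldType) (k : nat) (a b : 'I_k.+1 -> F) :
  (k.+1%:R ^+ 2)^-1 * \sum_i \sum_j a i * b j =
  ((k.+1%:R ^+ 2)^-1 * \sum_i \sum_(j < k.+1) a i) *
  ((k.+1%:R ^+ 2)^-1 * \sum_(i < k.+1) \sum_j b j).
Proof.
have k_neq0 : k.+1%:R != 0 :> F by rewrite pnatr_eq0.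
have row_sum (c : 'I_k.+1 -> F) : \sum_i \sum_(j < k.+1) c i = (\sum_i c i) * k.+1%:R.
  by rewrite mulr_suml; apply: eq_bigr => i _; rewrite sumr_const card_ord mulr_natr.
have col_sum (c : 'I_k.+1 -> F) : \sum_(i < k.+1) \sum_j c j = (\sum_j c j) * k.+1%:R.
  by rewrite sumr_const card_ord mulr_natr.
have -> : \sum_i \sum_j a i * b j = (\sum_i a i) * \sum_j b j.
  by rewrite mulr_suml; apply: eq_bigr => i _; rewrite mulr_sumr.
by rewrite row_sum col_sum; field.
Qed.

Lemma sum_offdiag (V : zmodType) (I : finType) (a : I -> I -> V) :
  \sum_i \sum_(j | j != i) a i j = \sum_i \sum_j a i j - \sum_i a i i.
Proof.
rewrite -sumrB; apply: eq_bigr => i _.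
by rewrite [in RHS](bigD1 i) //= addrC addrK.
Qed.

Lemma le_of_mix_le (R : realFieldType) (w a a' b b' : R) : 0 < w <= 1 ->
  (1 - w) * a' + w * b' <= (1 - w) * a + w * b -> a <= a' -> b' <= b.
Proof.
move=> /andP[w_gt0 w_le1] mix_le a_le; rewrite -(ler_pM2l w_gt0).
have w'_ge0 : 0 <= 1 - w by rewrite subr_ge0.
have := ler_wpM2l w'_ge0 a_le.
lra.
Qed.

Section GridDistribution.
Context {R : realType} {dY dX1 dX2 : measure_display}
  {Y : measurableType dY} {X1 : measurableType dX1} {X2 : measurableType dX2}.
Variables (n : nat) (y : 'I_n.+1 -> Y) (x1 : 'I_n.+1 -> X1) (x2 : 'I_n.+1 -> X2).

Let grid_point (i j : 'I_n.+1) : Y * X1 * X2 := (y j, x1 i, x2 j).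

Let grid_weight_ge0 : 0 <= (n.+1%:R ^+ 2)^-1 :> R.
Proof. by rewrite invr_ge0 exprn_ge0. Qed.

Let grid_counting : {measure set (Y * X1 * X2)%type -> \bar R} :=
  msum (fun i => msum (fun j => \d_(grid_point (inord i) (inord j))) n.+1) n.+1.

Definition grid_dist := mscale (NngNum grid_weight_ge0) grid_counting.

HB.instance Definition _ :=
  Measure.copy grid_dist (mscale (NngNum grid_weight_ge0) grid_counting).

Lemma grid_distE A : grid_dist A =
  ((n.+1%:R ^+ 2)^-1 * \sum_i \sum_j (grid_point i j \in A)%:R)%:E.
Proof.
rewrite /grid_dist /mscale /msum /= EFinM -sumEFin.
congr (_ * _)%E; apply: eq_bigr => i _; rewrite -sumEFin.
by apply: eq_bigr => j _; rewrite !inord_val; exact: diracE.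
Qed.

Lemma grid_dist_setT : grid_dist setT = 1%E.
Proof.
rewrite grid_distE.
under eq_bigr do under eq_bigr do rewrite in_setT.
rewrite !sumr_const !card_ord mulr1n -mulrnA natrM -expr2 mulVf // expf_neq0 // pnatr_eq0.
Qed.

HB.instance Definition _ :=
  Measure_isProbability.Build _ _ _ grid_dist grid_dist_setT.

Lemma grid_dist_X1_indep : X1_indep_X2Y (grid_dist : probability _ R).
Proof.
move=> A B _ _ /=; rewrite !grid_distE -EFinM.
rewrite -(grid_mean_mul (fun i => (x1 i \in A)%:R) (fun j => ((x2 j, y j) \in B)%:R)).
congr (_ * _)%:E; apply: eq_bigr => i _; apply: eq_bigr => j _.
rewrite -natrM mulnb; congr ((nat_of_bool _)%:R).
by apply/idP/andP => [/set_mem[? ?]|[/set_mem ? /set_mem ?]];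
  [split; exact/mem_set | exact/mem_set].
Qed.

Lemma integral_grid_dist (h : Y * X1 * X2 -> R) :
  measurable_fun setT h -> (forall z, 0 <= h z) ->
  (\int[grid_dist]_z (h z)%:E =
   ((n.+1%:R ^+ 2)^-1 * \sum_i \sum_j h (grid_point i j))%:E)%E.
Proof.
move=> mh h_ge0.
have mEh : measurable_fun setT (fun z => (h z)%:E) by exact/measurable_EFinP.
have Eh_ge0 z : setT z -> (0 <= (h z)%:E)%E by rewrite lee_fin.
rewrite ge0_integral_mscale // ge0_integral_measure_sum // EFinM -sumEFin.
congr (_ * _)%E; apply: eq_bigr => i _.
rewrite ge0_integral_measure_sum // -sumEFin; apply: eq_bigr => j _.
by rewrite integral_dirac // diracT mul1e !inord_val.
Qed.

End GridDistribution.

Section EmpiricalRisks.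
Context {R : realType} {Y X1 X2 : Type}.
Variables (L : (X1 * X2 -> Y) -> Y * X1 * X2 -> R) (n : nat).
Variables (y : 'I_n -> Y) (x1 : 'I_n -> X1) (x2 : 'I_n -> X2).
Hypothesis n_gt1 : (1 < n)%N.

Let n_neq0 : n%:R != 0 :> R. Proof. by rewrite pnatr_eq0 gtn_eqF // ltnW. Qed.
Let n_sub1_neq0 : n%:R - 1 != 0 :> R.
Proof. by rewrite subr_eq0 pnatr_eq1 gtn_eqF. Qed.

Lemma grid_mean_loss f :
  (n%:R ^+ 2)^-1 * \sum_i \sum_j L f (y j, x1 i, x2 j) =
  (1 - n%:R^-1) * e_switch L y x1 x2 f + n%:R^-1 * e_orig L y x1 x2 f.
Proof.
rewrite /e_switch /e_orig sum_offdiag.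
by field; rewrite n_neq0 n_sub1_neq0.
Qed.

Lemma e_switch_eq_e_orig f :
  (forall yy a b x, L f (yy, a, x) = L f (yy, b, x)) ->
  e_switch L y x1 x2 f = e_orig L y x1 x2 f.
Proof.
move=> L_X1; rewrite /e_switch /e_orig sum_offdiag.
under eq_bigr => i _ do under eq_bigr => j _ do rewrite (L_X1 _ (x1 i) (x1 j)).
rewrite sumr_const card_ord -mulr_natl.
by field; rewrite n_neq0 n_sub1_neq0.
Qed.

End EmpiricalRisks.

Lemma exp_loss_grid_dist {R : realType} {dY dX1 dX2 : measure_display}
    {Y : measurableType dY} {X1 : measurableType dX1} {X2 : measurableType dX2}
    (L : (X1 * X2 -> Y) -> Y * X1 * X2 -> R) (n : nat)
    (y : 'I_n.+2 -> Y) (x1 : 'I_n.+2 -> X1) (x2 : 'I_n.+2 -> X2) f :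
  measurable_fun setT (L f) -> (forall z, 0 <= L f z) ->
  exp_loss (grid_dist y x1 x2) L f =
  ((1 - n.+2%:R^-1) * e_switch L y x1 x2 f + n.+2%:R^-1 * e_orig L y x1 x2 f)%:E.
Proof.
by move=> mLf Lf_ge0; rewrite /exp_loss integral_grid_dist // grid_mean_loss.
Qed.

Theorem proposition17 (R : realType) (dY dX1 dX2 : measure_display)
  (Y : measurableType dY) (X1 : measurableType dX1) (X2 : measurableType dX2)
  (F : set (X1 * X2 -> Y)) (L : (X1 * X2 -> Y) -> Y * X1 * X2 -> R)
  (n : nat) (y : 'I_n -> Y) (x1 : 'I_n -> X1) (x2 : 'I_n -> X2) :
  (* F consists of measurable functions X1 x X2 -> Y *)
  (forall f, F f -> measurable_fun setT f) ->
  (* nonnegative loss, measurable in z so that expectations make sense *)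
  (forall f z, F f -> 0 <= L f z) ->
  (forall f, F f -> measurable_fun setT (L f)) ->
  (2 <= n)%N ->
  (* standing assumption: min_{f in F} e_orig(f) exists and is > 0 *)
  (exists2 f0, F f0 &
     (forall f, F f -> e_orig L y x1 x2 f0 <= e_orig L y x1 x2 f) /\
     0 < e_orig L y x1 x2 f0) ->
  (* standing assumption: minimizers of h_{-,gamma} exist *)
  (forall gamma : R, exists2 g, F g &
     forall f, F f -> h_minus gamma L y x1 x2 g <= h_minus gamma L y x1 x2 f) ->
  (* the loss depends on the covariates only through the prediction *)
  (forall f yy xa1 xa2 xb1 xb2, F f -> f (xa1, xa2) = f (xb1, xb2) ->
     L f (yy, xa1, xa2) = L f (yy, xb1, xb2)) ->
  (* for every distribution with X1 independent of (X2, Y), some optimal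
     model in F ignores X1 *)
  (forall D : probability (Y * X1 * X2)%type R, X1_indep_X2Y D ->
     exists2 fD, F fD &
       (forall f, F f -> (exp_loss D L fD <= exp_loss D L f)%E) /\
       (forall xa1 xb1 xx2, fD (xa1, xx2) = fD (xb1, xx2))) ->
  forall g_hat, F g_hat ->
    (forall f, F f -> h_minus 0 L y x1 x2 g_hat <= h_minus 0 L y x1 x2 f) ->
    MR_hat L y x1 x2 g_hat <= 1.
Proof.
move=> _ L_ge0 mL n_ge2 [f0 _ [f0_min f0_gt0]] _ L_pred opt_indep g Fg g_min.
case: n y x1 x2 n_ge2 f0_min f0_gt0 g_min => [|[|n]] // y x1 x2 _ f0_min f0_gt0 g_min.
have [fD FfD [fD_opt fD_X1]] := opt_indep _ (grid_dist_X1_indep y x1 x2).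
have risk f (Ff : F f) := exp_loss_grid_dist y x1 x2 (mL _ Ff) (L_ge0 f ^~ Ff).
have := fD_opt _ Fg; rewrite !risk // lee_fin => risk_le.
have switch_le : e_switch L y x1 x2 g <= e_switch L y x1 x2 fD.
  by have := g_min _ FfD; rewrite /h_minus !mul0r !add0r.
have switch_fD : e_switch L y x1 x2 fD = e_orig L y x1 x2 fD.
  by apply: e_switch_eq_e_orig => // yy a b x; apply: L_pred; rewrite ?fD_X1.
have orig_g_gt0 : 0 < e_orig L y x1 x2 g := lt_le_trans f0_gt0 (f0_min _ Fg).
have orig_le : e_orig L y x1 x2 fD <= e_orig L y x1 x2 g.
  by apply: le_of_mix_le risk_le switch_le; rewrite invr_gt0 invf_le1 ?ltr0n ?ler1n.
by rewrite /MR_hat ler_pdivrMr // mul1r (le_trans switch_le) // switch_fD.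
Qed.
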